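(* Let $S_j$ be local potentials satisfying (A)–(E), let $\omega\in\mathbb{R}^d\setminus\mathbb{Q}^d$, and let $x$ be a Birkhoff global minimizer with rotation vector $\omega$ such that $\tau_{k,l}x=x$ whenever $\langle\omega,k\rangle+l=0$. Then the recurrent set $\mathcal{M}(x)$ is, in the topology of pointwise convergence, either connected or a Cantor set (closed, perfect and totally disconnected).
   Context: Notation: $\|i\|=\sum_{k=1}^d|i_k|$, $B_j^r=\{k:\|k-j\|\le r\}$, $(\tau_{k,l}x)_i=x_{i+k}+l$. Local potentials $S_j:\mathbb{R}^{\mathbb{Z}^d}\to\mathbb{R}$, $j\in\mathbb{Z}^d$, satisfy: (A) there is $r\in(0,\infty)$ and $C^2$ functions $s_j:\mathbb{R}^{B_j^r}\to\mathbb{R}$ with $S_j(x)=s_j(x|_{B_j^r})$; (B) $S_j(\tau_{k,l}x)=S_{j+k}(x)$; (C) each $S_j$ is bounded below and $S_j(x)\to\infty$ as $|x_k-x_j|\to\infty$ whenever $\|k-j\|=1$; (D) $\partial_{i,k}S_j\le0$ for $i\ne k$, and $\partial_{i,k}S_i<0$ when $\|i-k\|=1$; (E) $|\partial_{i,k}S_j|\le C$ uniformly. Birkhoff: for every $(k,l)$, $\tau_{k,l}x\ge x$ or $\tau_{k,l}x\le x$ (pointwise order). Rotation vector $\omega$: $\lim_n x_{ni}/n=\langle\omega,i\rangle$ for all $i$. For finite $B$: $W_B=\sum_{j\in B}S_j$, $\mathring{B}^{(r)}=\{i\in B:B_i^r\subset B\}$; $x$ is a global minimizer if $W_B(x+y)\ge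 W_B(x)$ for all finite $B$ and all $y$ supported in $\mathring{B}^{(r)}$. $\widetilde{\mathcal{M}}(x)$ is the closure (in the topology of pointwise convergence) of $\{\tau_{k,l}x:(k,l)\in\mathbb{Z}^d\times\mathbb{Z}\}$, and $\mathcal{M}(x)=\{y\in\widetilde{\mathcal{M}}(x): y=\lim_{n\to\infty}\tau_{k_n,l_n}y\text{ pointwise for some sequence }(k_n,l_n)\text{ with }\langle\omega,k_n\rangle+l_n\ne0\}$. *)

From Stdlib Require Import Reals ZArith List Lra Lia.
Open Scope R_scope.

(* A point of Z^d is a Z-valued sequence vanishing from index d on;
   coordinates 0..d-1 are the genuine ones. *)
Definition pt (d : nat) := {v : nat -> Z | forall m, (d <= m)%nat -> v m = 0%Z}.

Definition coord {d} (p : pt d) (m : nat) : Z := proj1_sig p m.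

Definition padd {d} (p q : pt d) : pt d.
Proof.
  refine (exist _ (fun m => (coord p m + coord q m)%Z) _).
  intros m Hm; unfold coord; rewrite (proj2_sig p m Hm), (proj2_sig q m Hm); reflexivity.
Defined.

Definition psub {d} (p q : pt d) : pt d.
Proof.
  refine (exist _ (fun m => (coord p m - coord q m)%Z) _).
  intros m Hm; unfold coord; rewrite (proj2_sig p m Hm), (proj2_sig q m Hm); reflexivity.
Defined.

Definition pscale {d} (n : nat) (p : pt d) : pt d.
Proof.
  refine (exist _ (fun m => (Z.of_nat n * coord p m)%Z) _).
  intros m Hm; unfold coord; rewrite (proj2_sig p m Hm); lia.
Defined.

Fixpoint zsum (f : nat -> Z) (n : nat) : Z :=
  match n with O => 0%Z | S n' => (zsum f n' + f n')%Z end.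

Fixpoint rsum (f : nat -> R) (n : nat) : R :=
  match n with O => 0 | S n' => rsum f n' + f n' end.

Definition norm1 {d} (p : pt d) : Z := zsum (fun m => Z.abs (coord p m)) d.

Definition ball {d} (r : R) (j k : pt d) : Prop := IZR (norm1 (psub k j)) <= r.

Fixpoint agree_upto (f g : nat -> Z) (n : nat) : bool :=
  match n with O => true | S n' => andb (agree_upto f g n') (Z.eqb (f n') (g n')) end.
Definition pt_eqb {d} (p q : pt d) : bool := agree_upto (coord p) (coord q) d.

Definition config (d : nat) := pt d -> R.

Definition tau {d} (k : pt d) (l : Z) (x : config d) : config d :=
  fun i => x (padd i k) + IZR l.

(* <omega, k> ; omega in R^d given by its first d components *)
Definition dot {d} (omega : nat -> R) (k : pt d) : R :=
  rsum (fun m => omega m * IZR (coord k m)) d.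

Definition upd {d} (x : config d) (i : pt d) (t : R) : config d :=
  fun k => if pt_eqb k i then t else x k.

Definition has_partial {d} (F : config d -> R) (i : pt d) (G : config d -> R) : Prop :=
  forall x, derivable_pt_lim (fun t => F (upd x i t)) (x i) (G x).

(* continuity as a function of the coordinates in B (i.e. on R^B) *)
Definition cont_on {d} (B : pt d -> Prop) (G : config d -> R) : Prop :=
  forall x eps, 0 < eps -> exists delta, 0 < delta /\
    forall y, (forall k, B k -> Rabs (y k - x k) < delta) -> Rabs (G y - G x) < eps.

(* (A): locality with range r, and s_j of class C^2 on R^{B_j^r};
   D1 j i = d_i S_j,  D2 j i k = d_{i,k} S_j *)
Definition condA {d} (r : R) (S : pt d -> config d -> R)
  (D1 : pt d -> pt d -> config d -> R) (D2 : pt d -> pt d -> pt d -> config d -> R) : Prop :=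
  0 < r /\
  (forall j x y, (forall k, ball r j k -> x k = y k) -> S j x = S j y) /\
  (forall j i, has_partial (S j) i (D1 j i)) /\
  (forall j i k, has_partial (D1 j i) k (D2 j i k)) /\
  (forall j, cont_on (ball r j) (S j)) /\
  (forall j i, cont_on (ball r j) (D1 j i)) /\
  (forall j i k, cont_on (ball r j) (D2 j i k)).

Definition condB {d} (S : pt d -> config d -> R) : Prop :=
  forall j k l x, S j (tau k l x) = S (padd j k) x.

Definition condC {d} (S : pt d -> config d -> R) : Prop :=
  (forall j, exists m, forall x, m <= S j x) /\
  (forall j k, norm1 (psub k j) = 1%Z ->
     forall M, exists Rb, forall x, Rabs (x k - x j) > Rb -> S j x > M).

Definition condD {d} (D2 : pt d -> pt d -> pt d -> config d -> R) : Prop :=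
  (forall j i k x, i <> k -> D2 j i k x <= 0) /\
  (forall i k x, norm1 (psub i k) = 1%Z -> D2 i i k x < 0).

Definition condE {d} (D2 : pt d -> pt d -> pt d -> config d -> R) : Prop :=
  exists C, forall j i k x, Rabs (D2 j i k x) <= C.

(* W_B(x) for a finite set B given as a duplicate-free list *)
Definition W {d} (S : pt d -> config d -> R) (B : list (pt d)) (x : config d) : R :=
  fold_right (fun j acc => S j x + acc) 0 B.

Definition interior {d} (r : R) (B : list (pt d)) (i : pt d) : Prop :=
  In i B /\ forall k, ball r i k -> In k B.

Definition global_minimizer {d} (r : R) (S : pt d -> config d -> R) (x : config d) : Prop :=
  forall (B : list (pt d)) (y : config d), NoDup B ->
    (forall i, y i <> 0 -> interior r B i) ->
    W S B (fun i => x i + y i) >= W S B x.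

Definition birkhoff {d} (x : config d) : Prop :=
  forall k l, (forall i, tau k l x i >= x i) \/ (forall i, tau k l x i <= x i).

Definition has_rotation_vector {d} (x : config d) (omega : nat -> R) : Prop :=
  forall i, Un_cv (fun n => x (pscale n i) / INR n) (dot omega i).

Definition is_rational (a : R) : Prop := exists p q : Z, q <> 0%Z /\ a = IZR p / IZR q.
Definition not_in_Qd (d : nat) (omega : nat -> R) : Prop :=
  exists m, (m < d)%nat /\ ~ is_rational (omega m).

Definition nbhd {d} (x : config d) (F : list (pt d)) (eps : R) (y : config d) : Prop :=
  forall i, In i F -> Rabs (y i - x i) < eps.

Definition is_open {d} (U : config d -> Prop) : Prop :=
  forall x, U x -> exists F eps, 0 < eps /\ forall y, nbhd x F eps y -> U y.

Definition is_closed {d} (A : config d -> Prop) : Prop :=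
  is_open (fun x => ~ A x).

Definition closure {d} (A : config d -> Prop) (y : config d) : Prop :=
  forall F eps, 0 < eps -> exists z, A z /\ nbhd y F eps z.

Definition connected {d} (A : config d -> Prop) : Prop :=
  ~ exists U V, is_open U /\ is_open V /\
      (forall x, A x -> U x \/ V x) /\
      (exists x, A x /\ U x) /\ (exists x, A x /\ V x) /\
      (forall x, A x -> U x -> V x -> False).

Definition perfect {d} (A : config d -> Prop) : Prop :=
  is_closed A /\
  forall x, A x -> forall F eps, 0 < eps -> exists y, A y /\ y <> x /\ nbhd x F eps y.

Definition totally_disconnected {d} (A : config d -> Prop) : Prop :=
  forall C : config d -> Prop, (forall x, C x -> A x) -> connected C ->
    forall x y, C x -> C y -> x = y.

Definition cantor_set {d} (A : config d -> Prop) : Prop :=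
  is_closed A /\ perfect A /\ totally_disconnected A.

Definition Mtilde {d} (x : config d) : config d -> Prop :=
  closure (fun y => exists k l, y = tau k l x).

Definition Mrec {d} (omega : nat -> R) (x : config d) : config d -> Prop :=
  fun y => Mtilde x y /\
    exists (ks : nat -> pt d) (ls : nat -> Z),
      (forall n, dot omega (ks n) + IZR (ls n) <> 0) /\
      (forall i, Un_cv (fun n => tau (ks n) (ls n) y i) (y i)).

From Stdlib Require Import Reals ZArith List Lra Lia.
From Stdlib Require Import FunctionalExtensionality ProofIrrelevance IndefiniteDescription Classical.
Open Scope R_scope.

(** Let G = Z^d x Z act on configurations by tau, and give (k, l) in G the
    phase <omega, k> + l.  The argument only uses that x is Birkhoff, has
    rotation vector omega, is fixed by shifts of phase 0, and that omega is
    irrational.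
    1. The translates of x are ordered by phase: a smaller phase gives a
       translate strictly below, an equal phase the same translate.
    2. The phases form a subgroup of R containing 1 and an irrational
       number, hence they are dense.
    3. The hull is therefore totally ordered, and each hull point y has a
       unique phase s: y lies above all translates of phase < s and below
       all those of phase > s.
    4. For each t the one-sided limits lower t <= upper t of the translates
       have phase t and are recurrent, while a point of phase s lying strictly
       above lower s and strictly below upper s somewhere is not recurrent.
       Hence the recurrent set is closed, and it is perfect.
    5. If some phase carries two distinct hull points (a gap), translates of
       the gap separate any two points of the recurrent set, which is then
       totally disconnected.  Otherwise t |-> upper t is a continuous path
       through the whole recurrent set, which is then connected. *)

Lemma pt_ext {d} (p q : pt d) : (forall m, coord p m = coord q m) -> p = q.
Proof.
  destruct p as [f Hf], q as [g Hg]; unfold coord; simpl; intros H.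
  assert (f = g) by (apply functional_extensionality; exact H). subst g.
  f_equal; apply proof_irrelevance.
Qed.

Definition pzero {d} : pt d.
Proof. refine (exist _ (fun _ => 0%Z) _). intros; reflexivity. Defined.

Definition zscale {d} (z : Z) (p : pt d) : pt d.
Proof.
  refine (exist _ (fun m => (z * coord p m)%Z) _).
  intros m Hm; unfold coord; rewrite (proj2_sig p m Hm); lia.
Defined.

Definition unit_pt (d m : nat) : pt d.
Proof.
  refine (exist _ (fun j => if andb (Nat.ltb j d) (Nat.eqb j m) then 1%Z else 0%Z) _).
  intros j Hj. destruct (Nat.ltb_spec j d); [lia|reflexivity].
Defined.

Lemma coord_pscale {d} n (k : pt d) m : coord (pscale n k) m = (Z.of_nat n * coord k m)%Z.
Proof. reflexivity. Qed.
Lemma coord_padd {d} (a b : pt d) m : coord (padd a b) m = (coord a m + coord b m)%Z.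
Proof. reflexivity. Qed.
Lemma coord_psub {d} (a b : pt d) m : coord (psub a b) m = (coord a m - coord b m)%Z.
Proof. reflexivity. Qed.
Lemma coord_pzero {d} m : coord (@pzero d) m = 0%Z.
Proof. reflexivity. Qed.
Lemma coord_zscale {d} z (a : pt d) m : coord (zscale z a) m = (z * coord a m)%Z.
Proof. reflexivity. Qed.

Ltac pt_lia :=
  apply pt_ext; intro;
  repeat rewrite ?coord_padd, ?coord_psub, ?coord_pscale, ?coord_pzero, ?coord_zscale; lia.

Lemma padd_assoc {d} (a b c : pt d) : padd (padd a b) c = padd a (padd b c).
Proof. pt_lia. Qed.
Lemma padd_comm {d} (a b : pt d) : padd a b = padd b a.
Proof. pt_lia. Qed.
Lemma padd_zero {d} (a : pt d) : padd a pzero = a.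
Proof. pt_lia. Qed.
Lemma padd_psub {d} (a b : pt d) : padd (psub a b) b = a.
Proof. pt_lia. Qed.
Lemma padd_padd_psub {d} (i a b : pt d) : padd (padd i a) (psub b a) = padd i b.
Proof. pt_lia. Qed.
Lemma pscale_S {d} n (k : pt d) : pscale (S n) k = padd (pscale n k) k.
Proof. pt_lia. Qed.

Lemma rsum_ext f g n : (forall m, (m < n)%nat -> f m = g m) -> rsum f n = rsum g n.
Proof.
  induction n as [|n IH]; simpl; intros H; [reflexivity|].
  rewrite IH by (intros; apply H; lia). rewrite H by lia. reflexivity.
Qed.
Lemma rsum_minus f g n : rsum (fun m => f m - g m) n = rsum f n - rsum g n.
Proof. induction n; simpl; [lra|]. rewrite IHn; lra. Qed.
Lemma rsum_scal c f n : rsum (fun m => c * f m) n = c * rsum f n.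
Proof. induction n; simpl; [lra|]. rewrite IHn; lra. Qed.
Lemma rsum_zero n : rsum (fun _ => 0) n = 0.
Proof. induction n; simpl; [lra|]. rewrite IHn; lra. Qed.

Lemma dot_psub {d} om (a b : pt d) : dot om (psub a b) = dot om a - dot om b.
Proof.
  unfold dot. rewrite <- rsum_minus. apply rsum_ext; intros m _.
  rewrite coord_psub, minus_IZR. ring.
Qed.
Lemma dot_zscale {d} om z (a : pt d) : dot om (zscale z a) = IZR z * dot om a.
Proof.
  unfold dot. rewrite <- rsum_scal. apply rsum_ext; intros m _.
  rewrite coord_zscale, mult_IZR. ring.
Qed.
Lemma dot_pzero {d} om : dot om (@pzero d) = 0.
Proof.
  unfold dot. rewrite <- (rsum_zero d). apply rsum_ext; intros m _.
  rewrite coord_pzero. ring.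
Qed.
Lemma dot_unit_pt {d} om m : (m < d)%nat -> dot om (unit_pt d m) = om m.
Proof.
  intros Hm. unfold dot.
  assert (Hpartial : forall n, (n <= d)%nat ->
            rsum (fun j => om j * IZR (coord (unit_pt d m) j)) n
            = if Nat.ltb m n then om m else 0).
  { induction n as [|n IH]; intros Hn; [reflexivity|].
    change (rsum ?f (S n)) with (rsum f n + f n). rewrite IH by lia. unfold coord; simpl.
    destruct (Nat.ltb_spec n d); [|lia].
    destruct (Nat.eqb_spec n m), (Nat.ltb_spec m n), (Nat.ltb_spec m (S n));
      simpl; try lia; subst; lra. }
  rewrite Hpartial by lia. destruct (Nat.ltb_spec m d); [reflexivity|lia].
Qed.

Lemma slope_le (u : nat -> R) (a b c : R) :
  Un_cv (fun n => u n / INR n) a -> (forall n, u n + INR n * b <= c) -> a <= - b.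
Proof.
  intros Hu Hbound.
  assert (Hconst : Un_cv (fun _ : nat => c) c).
  { intros e He; exists O; intros; unfold R_dist; rewrite Rminus_diag, Rabs_R0; lra. }
  assert (Hconst' : Un_cv (fun _ : nat => - b) (- b)).
  { intros e He; exists O; intros; unfold R_dist; rewrite Rminus_diag, Rabs_R0; lra. }
  assert (Hright : Un_cv (fun n => c * RinvN n + - b) (c * 0 + - b))
    by exact (CV_plus _ _ _ _ (CV_mult _ _ _ _ Hconst RinvN_cv) Hconst').
  rewrite Rmult_0_r, Rplus_0_l in Hright.
  refine (Rle_cv_lim _ (CV_shift' _ 1 _ Hu) Hright).
  intro n. specialize (Hbound (n + 1)%nat). simpl.
  rewrite plus_INR in *. simpl INR in *. unfold RinvN, Rdiv.
  assert (Hn : 0 < INR n + 1) by (pose proof (pos_INR n); lra).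
  apply (Rmult_le_reg_r (INR n + 1)); [lra|].
  rewrite Rmult_plus_distr_r, !Rmult_assoc, Rinv_l by lra. lra.
Qed.

Lemma cv_finite_uniform {T} (u : T -> nat -> R) (a : T -> R) (F : list T) (eps : R) :
  (forall i, Un_cv (u i) (a i)) -> 0 < eps ->
  exists N, forall n, (N <= n)%nat -> forall i, In i F -> Rabs (u i n - a i) < eps.
Proof.
  intros H He. induction F as [|j F IH].
  - exists O. intros n _ i [].
  - destruct IH as [N1 H1]. destruct (H j eps He) as [N2 H2]. exists (N1 + N2)%nat.
    intros n Hn i [<-|Hi]; [apply H2; lia | apply H1; [lia|assumption]].
Qed.

Lemma interval_connected (a b : R) (P Q : R -> Prop) : a < b ->
  (forall t, P t -> exists dl, 0 < dl /\ forall t', Rabs (t' - t) < dl -> P t') ->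
  (forall t, Q t -> exists dl, 0 < dl /\ forall t', Rabs (t' - t) < dl -> Q t') ->
  (forall t, a <= t <= b -> P t \/ Q t) ->
  (forall t, a <= t <= b -> P t -> Q t -> False) ->
  P a -> Q b -> False.
Proof.
  intros Hab HP HQ Hcov Hdis Pa Qb.
  (* c is the supremum of the t such that [a, t] is contained in P *)
  set (E := fun t => a <= t <= b /\ forall t', a <= t' <= t -> P t').
  assert (Ea : E a) by (split; [lra|intros t' Ht'; replace t' with a by lra; exact Pa]).
  assert (Eb : bound E) by (exists b; intros t [Ht _]; lra).
  destruct (completeness E Eb (ex_intro _ a Ea)) as [c [Hub Hlub]].
  assert (Hac : a <= c) by (apply Hub; exact Ea).
  assert (Hcb : c <= b) by (apply Hlub; intros t [Ht _]; lra).
  assert (Hbelow : forall t', a <= t' < c -> P t').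
  { intros t' Ht'. destruct (classic (exists e, E e /\ t' <= e)) as [[e [[_ He] Hte]]|Hn].
    - apply He; lra.
    - enough (c <= t') by lra. apply Hlub. intros e Ee.
      apply Rnot_lt_le; intro; apply Hn; exists e; split; [assumption|lra]. }
  destruct (Hcov c (conj Hac Hcb)) as [Pc|Qc].
  - (* P would extend beyond c *)
    destruct (HP c Pc) as [dl [Hdl Hd]].
    destruct (Req_dec c b) as [->|Hcb']; [exact (Hdis b ltac:(lra) Pc Qb)|].
    assert (c < b) by (destruct (Rle_lt_or_eq_dec _ _ Hcb); [assumption|contradiction]).
    set (t1 := Rmin (c + dl/2) b).
    assert (Ht1 : c < t1 <= b /\ t1 <= c + dl/2)
      by (unfold t1, Rmin; destruct (Rle_dec (c+dl/2) b); lra).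
    assert (E t1).
    { split; [lra|]. intros t' Ht'. destruct (Rlt_or_le t' c); [apply Hbelow; lra|].
      apply Hd, Rabs_def1; lra. }
    assert (t1 <= c) by (apply Hub; assumption). lra.
  - (* Q would reach below c, into P *)
    destruct (HQ c Qc) as [dl [Hdl Hd]].
    destruct (Req_dec c a) as [->|Hca]; [exact (Hdis a ltac:(lra) Pa Qc)|].
    assert (a < c) by (destruct (Rle_lt_or_eq_dec _ _ Hac); [assumption|subst; contradiction]).
    set (t1 := Rmax a (c - dl/2)).
    assert (Ht1 : a <= t1 < c /\ c - dl/2 <= t1)
      by (unfold t1, Rmax; destruct (Rle_dec a (c-dl/2)); lra).
    apply (Hdis t1); [lra | apply Hbelow; lra | apply Hd; apply Rabs_def1; lra].
Qed.

Lemma subgroup_least_positive (P : R -> Prop) (eps : R) :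
  (forall a b, P a -> P b -> P (a - b)) -> P 1 -> 0 < eps ->
  (forall a, P a -> ~ (0 < a < eps)) ->
  exists c, P c /\ 0 < c /\ forall a, P a -> 0 < a -> c <= a.
Proof.
  intros Hsub P1 He Hgap.
  assert (Hge : forall a, P a -> 0 < a -> eps <= a).
  { intros a Pa Ha. destruct (Rlt_or_le a eps) as [Hl|]; [|assumption].
    exfalso; exact (Hgap a Pa (conj Ha Hl)). }
  (* -m is the infimum of the positive elements *)
  set (E := fun r => exists a, P a /\ 0 < a /\ r = - a).
  assert (Eb : is_upper_bound E (- eps))
    by (intros r [a [Pa [Ha ->]]]; specialize (Hge a Pa Ha); lra).
  assert (E1 : E (-1)) by (exists 1; repeat split; [exact P1|lra]).
  destruct (completeness E (ex_intro _ _ Eb) (ex_intro _ _ E1)) as [m [Hub Hlub]].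
  assert (Hm : m <= - eps) by exact (Hlub _ Eb).
  assert (Hinf : forall a, P a -> 0 < a -> - m <= a).
  { intros a Pa Ha. enough (- a <= m) by lra. apply Hub. exists a; auto. }
  assert (Happrox : forall e, - m < e -> exists a, P a /\ 0 < a /\ a < e).
  { intros e Hme. apply NNPP; intro Hn. enough (m <= - e) by lra. apply Hlub.
    intros r [a [Pa [Ha ->]]]. apply Ropp_le_contravar, Rnot_lt_le.
    intro; apply Hn; exists a; auto. }
  (* the infimum is attained, otherwise two elements closer than eps exist *)
  exists (- m). split; [|split; [lra|exact Hinf]].
  apply NNPP; intro Hnot.
  destruct (Happrox (- m + eps) ltac:(lra)) as [a2 [P2 [H2 H2']]].
  assert (Ha2 : - m < a2).
  { destruct (Rle_lt_or_eq_dec _ _ (Hinf a2 P2 H2)) as [|E2]; [assumption|].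
    rewrite E2 in Hnot. contradiction. }
  destruct (Happrox a2 Ha2) as [a1 [P1' [H1 H1']]].
  pose proof (Hinf a1 P1' H1).
  apply (Hgap (a2 - a1) (Hsub a2 a1 P2 P1')). lra.
Qed.

Lemma discrete_subgroup_cyclic (P : R -> Prop) (eps : R) :
  (forall a b, P a -> P b -> P (a - b)) -> (forall (n : Z) a, P a -> P (IZR n * a)) ->
  P 1 -> 0 < eps -> (forall a, P a -> ~ (0 < a < eps)) ->
  exists c, 0 < c /\ forall a, P a -> exists n : Z, a = IZR n * c.
Proof.
  intros Hsub Hmul P1 He Hgap.
  destruct (subgroup_least_positive P eps Hsub P1 He Hgap) as [c [Pc [Hc Hmin]]].
  exists c. split; [assumption|]. intros a Pa.
  (* the remainder of a modulo c lies in [0, c) and in P, hence is 0 *)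
  set (q := a / c). destruct (archimed q) as [A1 A2].
  exists (up q - 1)%Z. rewrite minus_IZR.
  set (rem := a - (IZR (up q) - 1) * c).
  assert (Prem : P rem).
  { unfold rem. rewrite <- minus_IZR. exact (Hsub _ _ Pa (Hmul _ _ Pc)). }
  assert (Hq : a = q * c) by (unfold q; field; lra).
  assert (Hrem : 0 <= rem < c) by (unfold rem; rewrite Hq; split; nra).
  destruct (Rle_lt_or_eq_dec _ _ (proj1 Hrem)) as [Hpos|Hzero].
  - pose proof (Hmin rem Prem Hpos). lra.
  - unfold rem in Hzero. lra.
Qed.

Lemma closed_of_adherent {d} (A : config d -> Prop) :
  (forall y, (forall F eps, 0 < eps -> exists z, A z /\ nbhd y F eps z) -> A y) ->
  is_closed A.
Proof.
  intros Hadh y Hy. apply NNPP; intro Hn. apply Hy, Hadh.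
  intros F eps He. apply NNPP; intro Hno. apply Hn. exists F, eps. split; [assumption|].
  intros z Hz Az. apply Hno. exists z; auto.
Qed.

Lemma halfspace_below_open {d} (i : pt d) (c : R) : is_open (fun w : config d => w i < c).
Proof.
  intros w Hw. exists (i :: nil), (c - w i). split; [lra|]. intros v Hv.
  specialize (Hv i (or_introl eq_refl)). apply Rabs_def2 in Hv. lra.
Qed.

Lemma halfspace_above_open {d} (i : pt d) (c : R) : is_open (fun w : config d => c < w i).
Proof.
  intros w Hw. exists (i :: nil), (w i - c). split; [lra|]. intros v Hv.
  specialize (Hv i (or_introl eq_refl)). apply Rabs_def2 in Hv. lra.
Qed.

Section Recurrent.

Variable d : nat.
Variable x : config d.
Variable omega : nat -> R.
Hypothesis hbirk : birkhoff x.
Hypothesis hrot : has_rotation_vector x omega.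
Hypothesis hsym : forall k l, dot omega k + IZR l = 0 -> forall i, tau k l x i = x i.
Hypothesis homega : not_in_Qd d omega.

Definition Shift := (pt d * Z)%type.
Definition orbit (g : Shift) : config d := tau (fst g) (snd g) x.
Definition phase (g : Shift) : R := dot omega (fst g) + IZR (snd g).
Definition shift_sub (g h : Shift) : Shift := (psub (fst g) (fst h), (snd g - snd h)%Z).
Definition shift_mul (z : Z) (g : Shift) : Shift := (zscale z (fst g), (z * snd g)%Z).

Definition cfg_le (y z : config d) : Prop := forall i, y i <= z i.

Lemma phase_sub g h : phase (shift_sub g h) = phase g - phase h.
Proof. unfold phase, shift_sub; simpl. rewrite dot_psub, minus_IZR. ring. Qed.
Lemma phase_mul z g : phase (shift_mul z g) = IZR z * phase g.
Proof. unfold phase, shift_mul; simpl. rewrite dot_zscale, mult_IZR. ring. Qed.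
Lemma phase_vertical l : phase (pzero, l) = IZR l.
Proof. unfold phase; simpl. rewrite dot_pzero. ring. Qed.
Lemma phase_unit m : (m < d)%nat -> phase (unit_pt d m, 0%Z) = omega m.
Proof. intros; unfold phase; simpl. rewrite dot_unit_pt by assumption. ring. Qed.

Lemma orbit_shift g h i : orbit h i = orbit (shift_sub h g) (padd i (fst g)) + IZR (snd g).
Proof. unfold orbit, shift_sub, tau; simpl. rewrite padd_padd_psub, minus_IZR. ring. Qed.
Lemma orbit_vertical l i : orbit (pzero, l) i = x i + IZR l.
Proof. unfold orbit, tau; simpl. rewrite padd_zero. reflexivity. Qed.

(* A translate of positive phase cannot lie below x: iterating it would force
   a rotation number <= its vertical shift. *)
Lemma positive_phase_not_below g : 0 < phase g -> ~ cfg_le (orbit g) x.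
Proof.
  destruct g as [k l]. unfold phase, cfg_le, orbit, tau; simpl. intros Hpos Hbelow.
  assert (Hiter : forall n, x (pscale n k) + INR n * IZR l <= x (pscale 0 k)).
  { induction n as [|n IH]; [simpl; lra|].
    rewrite pscale_S, S_INR. specialize (Hbelow (pscale n k)). lra. }
  pose proof (slope_le _ _ _ _ (hrot k) Hiter). lra.
Qed.

Lemma orbit_strict_mono g h :
  phase g < phase h -> cfg_le (orbit g) (orbit h) /\ ~ cfg_le (orbit h) (orbit g).
Proof.
  intros Hlt. set (e := shift_sub h g).
  assert (He : 0 < phase e) by (unfold e; rewrite phase_sub; lra).
  pose proof (positive_phase_not_below e He) as Hnot.
  (* by the Birkhoff property the translate by e lies above x *)
  assert (Habove : forall j, x j <= orbit e j).
  { destruct (hbirk (fst e) (snd e)) as [H|H].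
    - intros j; specialize (H j); unfold orbit; lra.
    - exfalso; apply Hnot; intros j; specialize (H j); unfold orbit; lra. }
  split.
  - intros i. rewrite (orbit_shift g h i). fold e. unfold orbit at 1, tau.
    specialize (Habove (padd i (fst g))). lra.
  - intros Hle. apply Hnot. intros j. specialize (Hle (psub j (fst g))).
    rewrite (orbit_shift g h) in Hle. fold e in Hle. rewrite padd_psub in Hle.
    unfold orbit at 2, tau in Hle. rewrite padd_psub in Hle. lra.
Qed.

Lemma orbit_phase_eq g h : phase g = phase h -> forall i, orbit g i = orbit h i.
Proof.
  intros Heq i. rewrite (orbit_shift g h i).
  assert (H0 : dot omega (fst (shift_sub h g)) + IZR (snd (shift_sub h g)) = 0)
    by (fold (phase (shift_sub h g)); rewrite phase_sub; lra).
  unfold orbit at 2. rewrite (hsym _ _ H0). unfold orbit, tau. reflexivity.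
Qed.

Lemma orbit_mono g h : phase g <= phase h -> cfg_le (orbit g) (orbit h).
Proof.
  intros H. destruct (Rle_lt_or_eq_dec _ _ H) as [Hlt|Heq].
  - apply orbit_strict_mono; assumption.
  - intros i. rewrite (orbit_phase_eq g h Heq i). lra.
Qed.

Lemma orbit_total g h : cfg_le (orbit g) (orbit h) \/ cfg_le (orbit h) (orbit g).
Proof. destruct (Rle_or_lt (phase g) (phase h)); [left|right]; apply orbit_mono; lra. Qed.

(** Since omega is irrational, the phases are dense in R. *)

Lemma phase_small eps : 0 < eps -> exists g, 0 < phase g < eps.
Proof.
  intros He. apply NNPP; intro Hn.
  set (P := fun a => exists g, phase g = a).
  destruct (discrete_subgroup_cyclic P eps) as [c [Hc Hmult]].
  - intros a b [g <-] [h <-]. exists (shift_sub g h). apply phase_sub.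
  - intros n a [g <-]. exists (shift_mul n g). apply phase_mul.
  - exists (pzero, 1%Z). apply phase_vertical.
  - assumption.
  - intros a [g <-] Hg. apply Hn. exists g. exact Hg.
  - (* then 1 and omega_m are both integer multiples of c *)
    destruct homega as [m [Hm Hirr]]. apply Hirr.
    destruct (Hmult 1 (ex_intro _ _ (phase_vertical 1))) as [n1 Hn1].
    destruct (Hmult (omega m) (ex_intro _ _ (phase_unit m Hm))) as [n2 Hn2].
    assert (Hn1' : IZR n1 <> 0) by (intro Hz; rewrite Hz in Hn1; lra).
    exists n2, n1. split; [intro Hz; subst; apply Hn1'; reflexivity|].
    rewrite Hn2. apply (Rmult_eq_reg_r (IZR n1)); [|assumption].
    replace (IZR n2 / IZR n1 * IZR n1) with (IZR n2) by (field; assumption).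
    rewrite Rmult_assoc, (Rmult_comm c), <- Hn1. ring.
Qed.

Lemma phase_dense a b : a < b -> exists g, a < phase g < b.
Proof.
  intros Hab. destruct (phase_small (b - a)) as [g0 [H0 H1]]; [lra|].
  set (t0 := phase g0) in *. destruct (archimed (a / t0)) as [A1 A2].
  set (q := a / t0) in *. assert (Hq : a = q * t0) by (unfold q; field; lra).
  exists (shift_mul (up q) g0). rewrite phase_mul. fold t0. split; nra.
Qed.

Definition Hull : config d -> Prop := Mtilde x.

Definition has_phase (y : config d) (s : R) : Prop :=
  (forall g, phase g < s -> cfg_le (orbit g) y) /\
  (forall g, s < phase g -> cfg_le y (orbit g)).

Lemma hull_orbit g : Hull (orbit g).
Proof.
  intros F eps He. exists (orbit g). split; [exists (fst g), (snd g); reflexivity|].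
  intros i _. rewrite Rminus_diag, Rabs_R0. lra.
Qed.

Lemma hull_closed y : (forall F eps, 0 < eps -> exists z, Hull z /\ nbhd y F eps z) -> Hull y.
Proof.
  intros H F eps He. destruct (H F (eps/2)) as [z [Hz1 Hz2]]; [lra|].
  destruct (Hz1 F (eps/2)) as [w [Hw1 Hw2]]; [lra|]. exists w. split; [assumption|].
  intros i Hi. specialize (Hz2 i Hi). specialize (Hw2 i Hi).
  apply Rabs_def2 in Hz2, Hw2. apply Rabs_def1; lra.
Qed.

Lemma hull_approx y F eps : Hull y -> 0 < eps -> exists g, nbhd y F eps (orbit g).
Proof. intros Hy He. destruct (Hy F eps He) as [z [[k [l ->]] Hz]]. exists (k, l). exact Hz. Qed.

(* the order of the orbit passes to its closure *)
Lemma hull_total y z : Hull y -> Hull z -> cfg_le y z \/ cfg_le z y.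
Proof.
  intros Hy Hz. destruct (classic (cfg_le y z)) as [H|H]; [left; assumption|right].
  apply not_all_ex_not in H. destruct H as [j Hj]. apply Rnot_le_lt in Hj.
  intros i. apply Rnot_lt_le. intro Hi.
  set (eps := Rmin (z i - y i) (y j - z j) / 2).
  assert (He : 0 < eps /\ 2 * eps <= z i - y i /\ 2 * eps <= y j - z j)
    by (unfold eps, Rmin; destruct (Rle_dec (z i - y i) (y j - z j)); lra).
  destruct (hull_approx y (i :: j :: nil) eps Hy (proj1 He)) as [g Hg].
  destruct (hull_approx z (i :: j :: nil) eps Hz (proj1 He)) as [h Hh].
  pose proof (Hg i ltac:(simpl; auto)) as Hgi. pose proof (Hg j ltac:(simpl; auto)) as Hgj.
  pose proof (Hh i ltac:(simpl; auto)) as Hhi. pose proof (Hh j ltac:(simpl; auto)) as Hhj.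
  apply Rabs_def2 in Hgi, Hgj, Hhi, Hhj.
  destruct (orbit_total g h) as [C|C]; [specialize (C j)|specialize (C i)]; lra.
Qed.

Lemma has_phase_orbit g : has_phase (orbit g) (phase g).
Proof. split; intros h Hh; apply orbit_mono; lra. Qed.

Lemma has_phase_mono y z s s' : cfg_le y z -> has_phase y s -> has_phase z s' -> s <= s'.
Proof.
  intros Hyz [Hy _] [_ Hz]. apply Rnot_lt_le. intro Hl.
  destruct (phase_dense s' s Hl) as [g [Hg1 Hg2]].
  destruct (phase_dense (phase g) s Hg2) as [h [Hh1 Hh2]].
  destruct (orbit_strict_mono g h Hh1) as [_ Hn]. apply Hn. intros i.
  specialize (Hy h Hh2 i). specialize (Hz g Hg1 i). specialize (Hyz i). lra.
Qed.

Lemma has_phase_unique y s s' : has_phase y s -> has_phase y s' -> s = s'.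
Proof.
  intros P P'. assert (Hrefl : cfg_le y y) by (intro; lra).
  apply Rle_antisym; [exact (has_phase_mono _ _ _ _ Hrefl P P') | exact (has_phase_mono _ _ _ _ Hrefl P' P)].
Qed.

(* the phase of a hull point is the supremum of the phases of translates below it *)
Lemma has_phase_exists y : Hull y -> exists s, has_phase y s.
Proof.
  intros Hy. set (p0 := @pzero d).
  destruct (archimed (y p0 - x p0)) as [A1 _]. destruct (archimed (x p0 - y p0)) as [B1 _].
  set (E := fun t => exists g, t = phase g /\ cfg_le (orbit g) y).
  assert (Eb : bound E).
  { exists (IZR (up (y p0 - x p0))). intros t [g [-> Hg]].
    apply Rnot_lt_le; intro Hlt. rewrite <- phase_vertical in Hlt.
    destruct (orbit_strict_mono _ _ Hlt) as [C _]. specialize (C p0). specialize (Hg p0).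
    rewrite orbit_vertical in C. lra. }
  set (ld := (- up (x p0 - y p0))%Z).
  assert (Hd : cfg_le (orbit (pzero, ld)) y).
  { destruct (hull_total y (orbit (pzero, ld)) Hy (hull_orbit _)) as [C|C]; [|assumption].
    exfalso. specialize (C p0). rewrite orbit_vertical in C. unfold ld in C.
    rewrite opp_IZR in C. lra. }
  destruct (completeness E Eb (ex_intro _ _ (ex_intro _ _ (conj eq_refl Hd))))
    as [s [Hub Hlub]].
  exists s. split.
  - intros g Hg. destruct (classic (exists e, E e /\ phase g < e)) as [[e [[h [-> Hh]] He]]|Hn].
    + intros i. pose proof (orbit_mono g h ltac:(lra) i). specialize (Hh i). lra.
    + exfalso. enough (s <= phase g) by lra. apply Hlub. intros e Ee.
      apply Rnot_lt_le. intro; apply Hn; exists e; split; assumption.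
  - intros g Hg. destruct (hull_total y (orbit g) Hy (hull_orbit g)) as [C|C]; [assumption|].
    exfalso. enough (phase g <= s) by lra. apply Hub. exists g. split; [reflexivity|assumption].
Qed.

Lemma phase_lt_le y z s s' : Hull y -> Hull z -> has_phase y s -> has_phase z s' -> s < s' ->
  cfg_le y z.
Proof.
  intros Hy Hz Py Pz Hl. destruct (hull_total y z Hy Hz) as [C|C]; [assumption|].
  pose proof (has_phase_mono z y s' s C Pz Py). lra.
Qed.

Lemma tau_comp k l k' l' (y : config d) : tau k l (tau k' l' y) = tau (padd k k') (l + l') y.
Proof. apply functional_extensionality; intro i. unfold tau. rewrite padd_assoc, plus_IZR. ring. Qed.

Lemma tau_comm k l k' l' (y : config d) : tau k l (tau k' l' y) = tau k' l' (tau k l y).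
Proof. rewrite !tau_comp, padd_comm, Z.add_comm. reflexivity. Qed.

Lemma hull_tau y k l : Hull y -> Hull (tau k l y).
Proof.
  intros Hy F eps He. destruct (Hy (map (fun i => padd i k) F) eps He) as [z [[k' [l' ->]] Hz]].
  exists (tau k l (tau k' l' x)). split; [rewrite tau_comp; eexists; eexists; reflexivity|].
  intros i Hi. unfold tau at 1 3.
  replace (tau k' l' x (padd i k) + IZR l - (y (padd i k) + IZR l))
    with (tau k' l' x (padd i k) - y (padd i k)) by ring.
  apply Hz, (in_map (fun i => padd i k)). assumption.
Qed.

Lemma has_phase_tau y s k l : has_phase y s -> has_phase (tau k l y) (s + phase (k, l)).
Proof.
  intros [Hlo Hhi]. split; intros h Hh i; rewrite (orbit_shift (k, l) h i); unfold tau; simpl.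
  - assert (phase (shift_sub h (k, l)) < s) by (rewrite phase_sub; lra).
    specialize (Hlo _ H (padd i k)). lra.
  - assert (s < phase (shift_sub h (k, l))) by (rewrite phase_sub; lra).
    specialize (Hhi _ H (padd i k)). lra.
Qed.

Lemma tau_moves y s k l : has_phase y s -> phase (k, l) <> 0 -> tau k l y <> y.
Proof.
  intros P Hne E. pose proof (has_phase_tau y s k l P) as P'. rewrite E in P'.
  pose proof (has_phase_unique y s _ P P'). lra.
Qed.

Definition Rec : config d -> Prop := Mrec omega x.

Lemma rec_hull y : Rec y -> Hull y.
Proof. intros [H _]. exact H. Qed.

Lemma rec_tau y k l : Rec y -> Rec (tau k l y).
Proof.
  intros [Hy [ks [ls [Hne Hcv]]]]. split; [apply hull_tau; assumption|].
  exists ks, ls. split; [assumption|]. intros i eps He.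
  destruct (Hcv (padd i k) eps He) as [N HN]. exists N. intros n Hn.
  rewrite tau_comm. unfold R_dist in *. unfold tau at 1 3.
  replace (tau (ks n) (ls n) y (padd i k) + IZR l - (y (padd i k) + IZR l))
    with (tau (ks n) (ls n) y (padd i k) - y (padd i k)) by ring.
  exact (HN n Hn).
Qed.

(* A point squeezed between two hull points a <= b of the same phase, strictly
   above a and strictly below b in some coordinates, is not recurrent: every
   shift of nonzero phase pushes it beyond a or beyond b. *)
Lemma squeezed_not_recurrent a b w s i j : Hull a -> Hull b -> Hull w ->
  has_phase a s -> has_phase b s -> a i < w i -> w j < b j -> ~ Rec w.
Proof.
  intros Ha Hb Hw Pa Pb Hi Hj [_ [ks [ls [Hne Hcv]]]].
  assert (Pw : has_phase w s).
  { destruct (has_phase_exists w Hw) as [s' Pw].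
    assert (Haw : cfg_le a w)
      by (destruct (hull_total a w Ha Hw) as [C|C]; [assumption|specialize (C i); lra]).
    assert (Hwb : cfg_le w b)
      by (destruct (hull_total w b Hw Hb) as [C|C]; [assumption|specialize (C j); lra]).
    pose proof (has_phase_mono _ _ _ _ Haw Pa Pw). pose proof (has_phase_mono _ _ _ _ Hwb Pw Pb).
    replace s with s' by lra. exact Pw. }
  set (eps := Rmin (w i - a i) (b j - w j)).
  assert (He : 0 < eps /\ eps <= w i - a i /\ eps <= b j - w j)
    by (unfold eps, Rmin; destruct (Rle_dec (w i - a i) (b j - w j)); lra).
  destruct (cv_finite_uniform (fun i n => tau (ks n) (ls n) w i) w (i :: j :: nil) eps Hcv (proj1 He))
    as [N HN].
  pose proof (HN N (le_n N) i ltac:(simpl; auto)) as Ci.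
  pose proof (HN N (le_n N) j ltac:(simpl; auto)) as Cj.
  simpl in Ci, Cj. apply Rabs_def2 in Ci, Cj.
  pose proof (has_phase_tau w s (ks N) (ls N) Pw) as PN.
  pose proof (hull_tau w (ks N) (ls N) Hw) as HN'.
  specialize (Hne N). fold (phase (ks N, ls N)) in Hne.
  destruct (Rtotal_order (phase (ks N, ls N)) 0) as [Hl|[He0|Hg]].
  - pose proof (phase_lt_le _ _ _ _ HN' Ha PN Pa ltac:(lra) i). lra.
  - contradiction.
  - pose proof (phase_lt_le _ _ _ _ Hb HN' Pb PN ltac:(lra) j). lra.
Qed.

(** One-sided limits of the orbit at a phase t: upper t is the coordinatewise
    infimum of the translates of phase > t, lower t the supremum of those of
    phase < t. *)

Definition values_above (t : R) (i : pt d) : R -> Prop :=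
  fun r => exists g, t < phase g /\ r = - orbit g i.

Lemma values_above_bound t i : bound (values_above t i).
Proof.
  destruct (phase_dense (t - 1) t ltac:(lra)) as [g0 [_ Hg0]]. exists (- orbit g0 i).
  intros r [g [Hg ->]]. pose proof (orbit_mono g0 g ltac:(lra) i). lra.
Qed.

Lemma values_above_inhabited t i : exists r, values_above t i r.
Proof.
  destruct (phase_dense t (t + 1) ltac:(lra)) as [g [Hg _]].
  exists (- orbit g i), g. split; [lra|reflexivity].
Qed.

Definition upper (t : R) : config d :=
  fun i => - proj1_sig (completeness _ (values_above_bound t i) (values_above_inhabited t i)).

Lemma upper_le_orbit t g i : t < phase g -> upper t i <= orbit g i.
Proof.
  intros H. unfold upper. destruct (completeness _ _ _) as [m [Hub Hlub]]; simpl.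
  enough (- orbit g i <= m) by lra. apply Hub. exists g; auto.
Qed.

Lemma upper_approx t i e : 0 < e -> exists g, t < phase g /\ orbit g i < upper t i + e.
Proof.
  intros He. unfold upper. destruct (completeness _ _ _) as [m [Hub Hlub]]; simpl.
  apply NNPP; intro Hn. enough (m <= m - e) by lra. apply Hlub. intros r [g [Hg ->]].
  apply Rnot_lt_le. intro; apply Hn. exists g. split; [assumption|lra].
Qed.

Lemma upper_greatest t w : (forall g, t < phase g -> cfg_le w (orbit g)) -> cfg_le w (upper t).
Proof.
  intros H i. unfold upper. destruct (completeness _ _ _) as [m [Hub Hlub]]; simpl.
  enough (m <= - w i) by lra. apply Hlub. intros r [g [Hg ->]]. specialize (H g Hg i). lra.
Qed.

Lemma upper_near t F eps : 0 < eps -> exists b, t < b /\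
  forall g, t < phase g < b -> forall i, In i F -> Rabs (orbit g i - upper t i) < eps.
Proof.
  intros He. induction F as [|j F IH].
  - exists (t + 1). split; [lra|]. intros g _ i [].
  - destruct IH as [b1 [Hb1 H1]]. destruct (upper_approx t j eps He) as [gj [Hgj1 Hgj2]].
    exists (Rmin b1 (phase gj)). split; [unfold Rmin; destruct (Rle_dec b1 (phase gj)); lra|].
    intros g [Hg1 Hg2] i [<-|Hi].
    + pose proof (Rmin_r b1 (phase gj)). pose proof (orbit_mono g gj ltac:(lra) j).
      pose proof (upper_le_orbit t g j Hg1). apply Rabs_def1; lra.
    + apply H1; [|assumption]. pose proof (Rmin_l b1 (phase gj)). lra.
Qed.

Lemma upper_hull t : Hull (upper t).
Proof.
  intros F eps He. destruct (upper_near t F eps He) as [b [Hb H]].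
  destruct (phase_dense t b Hb) as [g Hg]. exists (orbit g).
  split; [exists (fst g), (snd g); reflexivity|]. intros i Hi. apply H; assumption.
Qed.

Lemma upper_has_phase t : has_phase (upper t) t.
Proof.
  split; intros g Hg.
  - apply upper_greatest. intros h Hh. apply orbit_mono. lra.
  - intros i; apply upper_le_orbit; assumption.
Qed.

Lemma upper_right_limit t F eps : 0 < eps -> exists b, t < b /\
  forall z s, Hull z -> has_phase z s -> t < s < b -> nbhd (upper t) F eps z.
Proof.
  intros He. destruct (upper_near t F eps He) as [b [Hb Hnear]]. exists b. split; [assumption|].
  intros z s Hz Pz Hs i Hi. destruct (phase_dense s b ltac:(lra)) as [h Hh].
  pose proof (phase_lt_le _ _ _ _ (upper_hull t) Hz (upper_has_phase t) Pz ltac:(lra) i).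
  pose proof (phase_lt_le _ _ _ _ Hz (hull_orbit h) Pz (has_phase_orbit h) ltac:(lra) i).
  specialize (Hnear h ltac:(lra) i Hi). apply Rabs_def2 in Hnear. apply Rabs_def1; lra.
Qed.

Definition values_below (t : R) (i : pt d) : R -> Prop :=
  fun r => exists g, phase g < t /\ r = orbit g i.

Lemma values_below_bound t i : bound (values_below t i).
Proof.
  destruct (phase_dense t (t + 1) ltac:(lra)) as [g0 [Hg0 _]]. exists (orbit g0 i).
  intros r [g [Hg ->]]. pose proof (orbit_mono g g0 ltac:(lra) i). lra.
Qed.

Lemma values_below_inhabited t i : exists r, values_below t i r.
Proof.
  destruct (phase_dense (t - 1) t ltac:(lra)) as [g [_ Hg]].
  exists (orbit g i), g. split; [lra|reflexivity].
Qed.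

Definition lower (t : R) : config d :=
  fun i => proj1_sig (completeness _ (values_below_bound t i) (values_below_inhabited t i)).

Lemma orbit_le_lower t g i : phase g < t -> orbit g i <= lower t i.
Proof.
  intros H. unfold lower. destruct (completeness _ _ _) as [m [Hub Hlub]]; simpl.
  apply Hub. exists g; auto.
Qed.

Lemma lower_approx t i e : 0 < e -> exists g, phase g < t /\ lower t i - e < orbit g i.
Proof.
  intros He. unfold lower. destruct (completeness _ _ _) as [m [Hub Hlub]]; simpl.
  apply NNPP; intro Hn. enough (m <= m - e) by lra. apply Hlub. intros r [g [Hg ->]].
  apply Rnot_lt_le. intro; apply Hn. exists g. split; [assumption|lra].
Qed.

Lemma lower_least t w : (forall g, phase g < t -> cfg_le (orbit g) w) -> cfg_le (lower t) w.
Proof.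
  intros H i. unfold lower. destruct (completeness _ _ _) as [m [Hub Hlub]]; simpl.
  apply Hlub. intros r [g [Hg ->]]. apply (H g Hg i).
Qed.

Lemma lower_near t F eps : 0 < eps -> exists b, b < t /\
  forall g, b < phase g < t -> forall i, In i F -> Rabs (orbit g i - lower t i) < eps.
Proof.
  intros He. induction F as [|j F IH].
  - exists (t - 1). split; [lra|]. intros g _ i [].
  - destruct IH as [b1 [Hb1 H1]]. destruct (lower_approx t j eps He) as [gj [Hgj1 Hgj2]].
    exists (Rmax b1 (phase gj)). split; [unfold Rmax; destruct (Rle_dec b1 (phase gj)); lra|].
    intros g [Hg1 Hg2] i [<-|Hi].
    + pose proof (Rmax_r b1 (phase gj)). pose proof (orbit_mono gj g ltac:(lra) j).
      pose proof (orbit_le_lower t g j Hg2). apply Rabs_def1; lra.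
    + apply H1; [|assumption]. pose proof (Rmax_l b1 (phase gj)). lra.
Qed.

Lemma lower_hull t : Hull (lower t).
Proof.
  intros F eps He. destruct (lower_near t F eps He) as [b [Hb H]].
  destruct (phase_dense b t Hb) as [g Hg]. exists (orbit g).
  split; [exists (fst g), (snd g); reflexivity|]. intros i Hi. apply H; assumption.
Qed.

Lemma lower_has_phase t : has_phase (lower t) t.
Proof.
  split; intros g Hg.
  - intros i; apply orbit_le_lower; assumption.
  - apply lower_least. intros h Hh. apply orbit_mono. lra.
Qed.

Lemma lower_left_limit t F eps : 0 < eps -> exists b, b < t /\
  forall z s, Hull z -> has_phase z s -> b < s < t -> nbhd (lower t) F eps z.
Proof.
  intros He. destruct (lower_near t F eps He) as [b [Hb Hnear]]. exists b. split; [assumption|].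
  intros z s Hz Pz Hs i Hi. destruct (phase_dense b s ltac:(lra)) as [h Hh].
  pose proof (phase_lt_le _ _ _ _ Hz (lower_hull t) Pz (lower_has_phase t) ltac:(lra) i).
  pose proof (phase_lt_le _ _ _ _ (hull_orbit h) Hz (has_phase_orbit h) Pz ltac:(lra) i).
  specialize (Hnear h ltac:(lra) i Hi). apply Rabs_def2 in Hnear. apply Rabs_def1; lra.
Qed.

Lemma small_phase_sequence : exists gs : nat -> Shift, forall n, 0 < phase (gs n) < RinvN n.
Proof.
  apply (functional_choice (fun n g => 0 < phase g < RinvN n)).
  intro n. apply phase_small, RinvN_pos.
Qed.

Lemma recurrent_of_limit z t (gs : nat -> Shift) :
  Hull z -> has_phase z t -> (forall n, phase (gs n) <> 0) ->
  (forall F eps, 0 < eps -> exists N, forall n, (N <= n)%nat ->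
     nbhd z F eps (tau (fst (gs n)) (snd (gs n)) z)) ->
  Rec z.
Proof.
  intros Hz Pz Hne Hlim. split; [exact Hz|].
  exists (fun n => fst (gs n)), (fun n => snd (gs n)). split; [exact Hne|].
  intros i eps He. destruct (Hlim (i :: nil) eps He) as [N HN]. exists N. intros n Hn.
  exact (HN n Hn i (or_introl eq_refl)).
Qed.

Lemma upper_rec t : Rec (upper t).
Proof.
  destruct small_phase_sequence as [gs Hgs].
  apply (recurrent_of_limit _ t gs (upper_hull t) (upper_has_phase t));
    [intro n; specialize (Hgs n); lra|].
  intros F eps He. destruct (upper_right_limit t F eps He) as [b [Hb Hlim]].
  destruct (@RinvN_cv (b - t)) as [N HN]; [lra|]. exists N. intros n Hn.
  specialize (HN n Hn). specialize (Hgs n). unfold Rdist in HN.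
  rewrite Rminus_0_r, Rabs_right in HN by lra.
  apply (Hlim _ (t + phase (gs n))); [apply hull_tau, upper_hull| |lra].
  pose proof (has_phase_tau _ _ (fst (gs n)) (snd (gs n)) (upper_has_phase t)) as P.
  rewrite <- surjective_pairing in P. exact P.
Qed.

Lemma lower_rec t : Rec (lower t).
Proof.
  destruct small_phase_sequence as [gs Hgs].
  apply (recurrent_of_limit _ t (fun n => shift_mul (-1) (gs n)) (lower_hull t) (lower_has_phase t));
    [intro n; rewrite phase_mul; specialize (Hgs n); lra|].
  intros F eps He. destruct (lower_left_limit t F eps He) as [b [Hb Hlim]].
  destruct (@RinvN_cv (t - b)) as [N HN]; [lra|]. exists N. intros n Hn.
  specialize (HN n Hn). specialize (Hgs n). unfold Rdist in HN.
  rewrite Rminus_0_r, Rabs_right in HN by lra.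
  assert (Hph : phase (shift_mul (-1) (gs n)) = - phase (gs n)) by (rewrite phase_mul; ring).
  apply (Hlim _ (t + phase (shift_mul (-1) (gs n)))); [apply hull_tau, lower_hull| |lra].
  set (g := shift_mul (-1) (gs n)).
  pose proof (has_phase_tau _ _ (fst g) (snd g) (lower_has_phase t)) as P.
  rewrite <- surjective_pairing in P. exact P.
Qed.

Lemma cfg_lt_somewhere y z : cfg_le y z -> y <> z -> exists i, y i < z i.
Proof.
  intros Hle Hne. apply NNPP; intro Hn. apply Hne, functional_extensionality. intro i.
  apply Rle_antisym; [apply Hle|]. apply Rnot_lt_le; intro Hi. apply Hn; exists i; exact Hi.
Qed.

(* An adherent point of Rec lies in the hull; if it differed from both lower s
   and upper s, recurrent points nearby would be squeezed between them. *)
Lemma rec_closed : is_closed Rec.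
Proof.
  apply closed_of_adherent. intros y Hadh.
  assert (Hy : Hull y).
  { apply hull_closed. intros F eps He. destruct (Hadh F eps He) as [z [Rz Hz]].
    exists z. split; [apply rec_hull|]; assumption. }
  destruct (has_phase_exists y Hy) as [s Ps].
  destruct (classic (y = upper s)) as [->|Hnu]; [apply upper_rec|].
  destruct (classic (y = lower s)) as [->|Hnl]; [apply lower_rec|].
  destruct (cfg_lt_somewhere y (upper s)) as [i Hi]; [apply upper_greatest, Ps|assumption|].
  destruct (cfg_lt_somewhere (lower s) y) as [j Hj]; [apply lower_least, Ps|congruence|].
  set (eps := Rmin (upper s i - y i) (y j - lower s j)).
  assert (He : 0 < eps /\ eps <= upper s i - y i /\ eps <= y j - lower s j)
    by (unfold eps, Rmin; destruct (Rle_dec (upper s i - y i) (y j - lower s j)); lra).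
  destruct (Hadh (i :: j :: nil) eps (proj1 He)) as [z [Rz Hz]].
  pose proof (Hz i ltac:(simpl; auto)) as Zi. pose proof (Hz j ltac:(simpl; auto)) as Zj.
  apply Rabs_def2 in Zi, Zj. exfalso.
  exact (squeezed_not_recurrent (lower s) (upper s) z s j i (lower_hull s) (upper_hull s)
           (rec_hull z Rz) (lower_has_phase s) (upper_has_phase s) ltac:(lra) ltac:(lra) Rz).
Qed.

(* the shifts witnessing recurrence produce distinct nearby points of Rec *)
Lemma rec_perfect : perfect Rec.
Proof.
  split; [exact rec_closed|]. intros y Ry F eps He.
  pose proof Ry as [Hy [ks [ls [Hne Hcv]]]].
  destruct (cv_finite_uniform (fun i n => tau (ks n) (ls n) y i) y F eps Hcv He) as [N HN].
  exists (tau (ks N) (ls N) y). split; [apply rec_tau; assumption|]. split.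
  - destruct (has_phase_exists y Hy) as [s Ps]. exact (tau_moves y s (ks N) (ls N) Ps (Hne N)).
  - intros i Hi. exact (HN N (le_n N) i Hi).
Qed.

Definition has_gap : Prop :=
  exists a b s j, Hull a /\ Hull b /\ has_phase a s /\ has_phase b s /\ a j < b j.

(* translating a gap by shifts of dense phases places gaps at phases
   in every open interval *)
Lemma gap_in_interval t1 t2 : has_gap -> t1 < t2 -> exists a b s j,
  Hull a /\ Hull b /\ has_phase a s /\ has_phase b s /\ a j < b j /\ t1 < s < t2.
Proof.
  intros [a [b [s [j [Ha [Hb [Pa [Pb Hab]]]]]]]] Ht.
  destruct (phase_dense (t1 - s) (t2 - s) ltac:(lra)) as [[k l] Hg].
  exists (tau k l a), (tau k l b), (s + phase (k, l)), (psub j k).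
  split; [apply hull_tau; assumption|]. split; [apply hull_tau; assumption|].
  split; [apply has_phase_tau; assumption|]. split; [apply has_phase_tau; assumption|].
  split; [unfold tau; rewrite padd_psub; lra | lra].
Qed.

Lemma gap_separates (C : config d -> Prop) y z a b s j :
  (forall w, C w -> Rec w) -> connected C -> C y -> C z ->
  Hull a -> Hull b -> has_phase a s -> has_phase b s -> a j < b j ->
  cfg_le y a -> cfg_le b z -> False.
Proof.
  intros HC Hconn Cy Cz Ha Hb Pa Pb Hab Hya Hbz. apply Hconn.
  set (c := (a j + b j) / 2).
  exists (fun w => w j < c), (fun w => c < w j).
  split; [apply halfspace_below_open|]. split; [apply halfspace_above_open|].
  split; [|split; [|split]].
  - (* a point of C on the hyperplane w_j = c would be squeezed between a and b *)
    intros w Cw. destruct (Rtotal_order (w j) c) as [H|[H|H]]; [left; assumption| |right; assumption].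
    exfalso. apply (squeezed_not_recurrent a b w s j j Ha Hb (rec_hull w (HC w Cw)) Pa Pb);
      [unfold c in H; lra | unfold c in H; lra | exact (HC w Cw)].
  - exists y. split; [assumption|]. specialize (Hya j). unfold c; lra.
  - exists z. split; [assumption|]. specialize (Hbz j). unfold c; lra.
  - intros w _ H1 H2. lra.
Qed.

Lemma gap_totally_disconnected : has_gap -> totally_disconnected Rec.
Proof.
  intros Hgap C HC Hconn.
  assert (Hflat : forall y z i, C y -> C z -> cfg_le y z -> y i < z i -> False).
  { intros y z i Cy Cz Hyz Hi.
    pose proof (rec_hull y (HC y Cy)) as Hy. pose proof (rec_hull z (HC z Cz)) as Hz.
    destruct (has_phase_exists y Hy) as [sy Py]. destruct (has_phase_exists z Hz) as [sz Pz].
    destruct (Rle_lt_or_eq_dec _ _ (has_phase_mono _ _ _ _ Hyz Py Pz)) as [Hlt|<-].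
    - destruct (gap_in_interval sy sz Hgap Hlt) as [a [b [s [j [Ha [Hb [Pa [Pb [Hab Hs]]]]]]]]].
      apply (gap_separates C y z a b s j HC Hconn Cy Cz Ha Hb Pa Pb Hab).
      + apply (phase_lt_le _ _ _ _ Hy Ha Py Pa). lra.
      + apply (phase_lt_le _ _ _ _ Hb Hz Pb Pz). lra.
    - apply (gap_separates C y z y z sy i HC Hconn Cy Cz Hy Hz Py Pz Hi); intro; lra. }
  intros y z Cy Cz. apply NNPP; intro Hne.
  destruct (hull_total y z (rec_hull y (HC y Cy)) (rec_hull z (HC z Cz))) as [H|H].
  - destruct (cfg_lt_somewhere y z H Hne) as [i Hi]. exact (Hflat y z i Cy Cz H Hi).
  - destruct (cfg_lt_somewhere z y H (not_eq_sym Hne)) as [i Hi]. exact (Hflat z y i Cz Cy H Hi).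
Qed.

Section NoGap.

Hypothesis hnogap : ~ has_gap.

Lemma hull_point_of_phase a b s : Hull a -> Hull b -> has_phase a s -> has_phase b s -> a = b.
Proof.
  intros Ha Hb Pa Pb. apply functional_extensionality; intro j.
  destruct (Rtotal_order (a j) (b j)) as [H|[H|H]]; [|assumption|];
    exfalso; apply hnogap; [exists a, b, s, j|exists b, a, s, j]; auto.
Qed.

(* hence upper = lower, and t |-> upper t is continuous from both sides *)
Lemma upper_continuous t F eps : 0 < eps -> exists dl, 0 < dl /\
  forall t', Rabs (t' - t) < dl -> nbhd (upper t) F eps (upper t').
Proof.
  intros He. destruct (upper_right_limit t F eps He) as [b [Hb Hright]].
  destruct (lower_left_limit t F eps He) as [b' [Hb' Hleft]].
  exists (Rmin (b - t) (t - b')).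
  split; [unfold Rmin; destruct (Rle_dec (b - t) (t - b')); lra|].
  intros t' Ht'. pose proof (Rmin_l (b - t) (t - b')). pose proof (Rmin_r (b - t) (t - b')).
  apply Rabs_def2 in Ht'.
  destruct (Rtotal_order t t') as [Hl|[<-|Hl]].
  - exact (Hright _ t' (upper_hull t') (upper_has_phase t') ltac:(lra)).
  - intros i _. rewrite Rminus_diag, Rabs_R0. assumption.
  - rewrite (hull_point_of_phase _ _ t (upper_hull t) (lower_hull t) (upper_has_phase t) (lower_has_phase t)).
    exact (Hleft _ t' (upper_hull t') (upper_has_phase t') ltac:(lra)).
Qed.

(* Rec is the image of the path t |-> upper t; two points of Rec in disjoint
   open sets would disconnect the interval between their phases *)
Lemma no_gap_path_unsplit (U V : config d -> Prop) y z sy sz :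
  is_open U -> is_open V ->
  (forall w, Rec w -> U w \/ V w) -> (forall w, Rec w -> U w -> V w -> False) ->
  Rec y -> U y -> Rec z -> V z -> has_phase y sy -> has_phase z sz -> sy < sz -> False.
Proof.
  intros HU HV Hcov Hdis Ry Uy Rz Vz Py Pz Hl.
  assert (Hpre : forall W : config d -> Prop, is_open W -> forall t, W (upper t) ->
            exists dl, 0 < dl /\ forall t', Rabs (t' - t) < dl -> W (upper t')).
  { intros W HW t Wt. destruct (HW _ Wt) as [F [eps [He HF]]].
    destruct (upper_continuous t F eps He) as [dl [Hdl Hc]].
    exists dl; split; [assumption|]. intros t' Ht'. apply HF, Hc. assumption. }
  apply (interval_connected sy sz (fun t => U (upper t)) (fun t => V (upper t)) Hl
           (Hpre U HU) (Hpre V HV)).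
  - intros t _. apply Hcov, upper_rec.
  - intros t _. apply Hdis, upper_rec.
  - rewrite <- (hull_point_of_phase y (upper sy) sy (rec_hull y Ry) (upper_hull sy) Py (upper_has_phase sy)).
    assumption.
  - rewrite <- (hull_point_of_phase z (upper sz) sz (rec_hull z Rz) (upper_hull sz) Pz (upper_has_phase sz)).
    assumption.
Qed.

Lemma no_gap_connected : connected Rec.
Proof.
  intros [U [V [HU [HV [Hcov [[y [Ry Uy]] [[z [Rz Vz]] Hdis]]]]]]].
  destruct (has_phase_exists y (rec_hull y Ry)) as [sy Py].
  destruct (has_phase_exists z (rec_hull z Rz)) as [sz Pz].
  destruct (Rtotal_order sy sz) as [Hl|[<-|Hl]].
  - exact (no_gap_path_unsplit U V y z sy sz HU HV Hcov Hdis Ry Uy Rz Vz Py Pz Hl).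
  - rewrite (hull_point_of_phase y z sy (rec_hull y Ry) (rec_hull z Rz) Py Pz) in Uy.
    exact (Hdis z Rz Uy Vz).
  - refine (no_gap_path_unsplit V U z y sz sy HV HU _ _ Rz Vz Ry Uy Pz Py Hl).
    + intros w Rw. destruct (Hcov w Rw); auto.
    + intros w Rw H1 H2. exact (Hdis w Rw H2 H1).
Qed.

End NoGap.

Lemma rec_connected_or_cantor : connected Rec \/ cantor_set Rec.
Proof.
  destruct (classic has_gap) as [Hg|Hg].
  - right. exact (conj rec_closed (conj rec_perfect (gap_totally_disconnected Hg))).
  - left. exact (no_gap_connected Hg).
Qed.

End Recurrent.

Theorem mainTheorem9 (d : nat) (r : R) (S : pt d -> config d -> R)
  (hA : exists D1 D2, condA r S D1 D2 /\ condD D2 /\ condE D2)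
  (hB : condB S) (hC : condC S)
  (omega : nat -> R) (homega : not_in_Qd d omega)
  (x : config d)
  (hbirk : birkhoff x) (hmin : global_minimizer r S x)
  (hrot : has_rotation_vector x omega)
  (hsym : forall k l, dot omega k + IZR l = 0 -> forall i, tau k l x i = x i) :
  connected (Mrec omega x) \/ cantor_set (Mrec omega x).
Proof.
  exact (rec_connected_or_cantor d x omega hbirk hrot hsym homega).
Qed.
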